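(* Assume the perfect setting (the pretrained LLM coincides with the conditional distribution $\mathtt{LLM}$ induced by the pretraining distribution $\mathbb{P}_{\mathcal{D}}$ described in the context, and the Reporter's translator coincides with the true emission $\mathbb{O}$). Then for all $(h,t)\in[H]\times[T]$, the LLM's recommended policy $\pi^t_{h,\mathtt{LLM}}(\cdot\mid\tau_h^t,\omega^t):=\mathtt{LLM}(\cdot\mid \mathtt{pt}_h^t)$ satisfies $$\pi^t_{h,\mathtt{LLM}}(\cdot\mid\tau_h^t,\omega^t)=\sum_{z\in\mathcal{Z}}\pi^*_{z,h}(\cdot\mid\tau_h^t,\omega^t)\cdot\mathbb{P}_{\mathcal{D}}(z\mid\mathtt{pt}_h^t),$$ where $\mathtt{pt}_h^t=\mathcal{H}_t\cup\{\omega^t,\tau_h^t\}$ and $\mathbb{P}_{\mathcal{D}}(z\mid \mathtt{pt}_h^t)$ is the posterior of $z$ given the prompt under $\mathbb{P}_{\mathcal{D}}$.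
   Context: High-level model: a finite set $\mathcal{Z}$ of latent variables; state space $\mathcal{S}$, observation space $\mathcal{O}$, subgoal space $\mathcal{G}$, task space $\Omega$, horizon $H\in\mathbb{N}$. For each $z\in\mathcal{Z}$ there are transition kernels $\mathbb{P}_{z,h}(s'\mid s,g)$, $h\in[H]$; a common emission distribution $\mathbb{O}(o\mid s)$; an initial state distribution $\rho$; rewards $r_h(o,\omega)\in[0,1]$. A trajectory up to step $h$ is $\tau_h=(o_1,g_1,\dots,o_{h-1},g_{h-1},o_h)$. A policy is $\pi=\{\pi_h\}_{h\in[H]}$ with $\pi_h:(\mathcal{O}\times\mathcal{G})^{h-1}\times\mathcal{O}\times\Omega\to\Delta(\mathcal{G})$; under $z$ and task $\omega$: $s_1\sim\rho$, $o_h\sim\mathbb{O}(\cdot\mid s_h)$, $g_h\sim\pi_h(\cdot\mid\tau_h,\omega)$, $s_{h+1}\sim\mathbb{P}_{z,h}(\cdot\mid s_h,g_h)$. The value is $\mathcal{J}_z(\pi,\omega)=\mathbb{E}[\sum_{h=1}^H r_h(o_h,\omega)]$ and $\pi^*_z(\omega)\in\arg\max_\pi\mathcal{J}_z(\pi,\omega)$ is an optimal policy with step-$h$ components $\pi^*_{z,h}(\cdot\mid\tau_h,\omega)$. Pretraining distribution: given priors $\mathcal{P}_{\mathcal{Z}}$ on $\mathcal{Z}$, $\mathcal{P}_\Omega$ on $\Omega$, a behavior policy $\pi^b$ and $T_{\rm p}\in\mathbb{N}$, a data point $D=\{z\}\cup\{\omega^t,\tau_H^t,g^{t,*}_{1:H},s^t_{1:H}\}_{t\in[T_{\rm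 p}]}$ has joint law $$\mathbb{P}_{\mathcal{D}}(D)=\mathcal{P}_{\mathcal{Z}}(z)\prod_{t=1}^{T_{\rm p}}\mathcal{P}_\Omega(\omega^t)\prod_{h=1}^{H}\pi^*_{z,h}(g^{t,*}_h\mid\tau_h^t,\omega^t)\,\mathbb{O}(o_h^t\mid s_h^t)\,\pi^b_h(g_h^t\mid\tau_h^t,\omega^t)\,\mathbb{P}_{z,h}(s^t_{h+1}\mid s_h^t,g_h^t)$$ (the expert labels $g^{t,*}_h$ do not influence the trajectory). The LLM is trained on the token sequences $(\omega^t,o_1^t,g_1^t,\dots,o_H^t)_{t}$ where at each subgoal position the target token is the expert label $g_h^{t,*}$; the (perfect) $\mathtt{LLM}(\cdot\mid S)$ is the conditional distribution under $\mathbb{P}_{\mathcal{D}}$ of the next target token given the preceding token sequence $S$ (with $z$ unobserved). In episode $t$ of deployment, $\mathcal{H}_t=\{\omega^i,\tau_H^i\}_{i=1}^{t-1}$ is the history of previous tasks and full trajectories, and the prompt at step $h$ is $\mathtt{pt}_h^t=\mathcal{H}_t\cup\{\omega^t,\tau_h^t\}$. *)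

From HB Require Import structures.
From mathcomp Require Import all_boot all_order all_algebra.
Set Implicit Arguments. Unset Strict Implicit. Unset Printing Implicit Defensive.
Import Order.TTheory GRing.Theory Num.Theory.
Local Open Scope ring_scope.

Section Model.
Variable R : realFieldType.
(* latent variables, states, observations, subgoals, tasks *)
Variables (Z S O G W : finType).
(* horizon H (steps indexed by 'I_H) and number of pretraining episodes Tp *)
Variables (H Tp : nat).

Definition is_dist (T : finType) (p : T -> R) :=
  (forall x, 0 <= p x) /\ \sum_(x : T) p x = 1.

(* policy: pi h past o w g = pi_h(g | tau_h = (past, o), w),
   past = (o_1,g_1,...,o_{h-1},g_{h-1}) *)
Definition policy := 'I_H -> seq (O * G) -> O -> W -> G -> R.
Definition is_policy (pi : policy) :=
  forall h past o w, is_dist (pi h past o w).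

Definition past (o : {ffun 'I_H -> O}) (g : {ffun 'I_H -> G}) (h : 'I_H)
  : seq (O * G) :=
  map (fun i => (o i, g i)) (filter (fun i : 'I_H => (i < h)%N) (enum 'I_H)).

Definition prev_ord (i : 'I_H) : option 'I_H :=
  if (0 < i)%N then insub (i.-1) else None.

Variables (rho : S -> R) (Ptr : Z -> 'I_H -> S -> G -> S -> R) (Ob : S -> O -> R).

Definition state_factor (z : Z) (s : {ffun 'I_H -> S}) (g : {ffun 'I_H -> G})
  (h : 'I_H) : R :=
  match prev_ord h with
  | None => rho (s h)
  | Some j => Ptr z j (s j) (g j) (s h)
  end.

Definition epi_prob (z : Z) (pi : policy) (w : W) (s : {ffun 'I_H -> S})
  (o : {ffun 'I_H -> O}) (g : {ffun 'I_H -> G}) : R :=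
  \prod_(h : 'I_H)
     (state_factor z s g h * Ob (s h) (o h) * pi h (past o g h) (o h) w (g h)).

Variable r : 'I_H -> O -> W -> R.

Definition J (z : Z) (pi : policy) (w : W) : R :=
  \sum_(s : {ffun 'I_H -> S}) \sum_(o : {ffun 'I_H -> O})
   \sum_(g : {ffun 'I_H -> G})
     epi_prob z pi w s o g * \sum_(h : 'I_H) r h (o h) w.

Variables (PZ : Z -> R) (PW : W -> R) (pib : policy) (pistar : Z -> policy).

(* a pretraining data point D = (z, w^t, o^t_h, g^t_h, g^{t,*}_h, s^t_h) *)
Definition data : finType :=
  (Z * ({ffun 'I_Tp -> W} * ({ffun 'I_Tp -> {ffun 'I_H -> O}} *
   ({ffun 'I_Tp -> {ffun 'I_H -> G}} * ({ffun 'I_Tp -> {ffun 'I_H -> G}} *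
    {ffun 'I_Tp -> {ffun 'I_H -> S}})))))%type.

Definition dz (d : data) : Z := d.1.
Definition dw (d : data) : {ffun 'I_Tp -> W} := d.2.1.
Definition dob (d : data) : {ffun 'I_Tp -> {ffun 'I_H -> O}} := d.2.2.1.
Definition dg (d : data) : {ffun 'I_Tp -> {ffun 'I_H -> G}} := d.2.2.2.1.
Definition dgs (d : data) : {ffun 'I_Tp -> {ffun 'I_H -> G}} := d.2.2.2.2.1.
Definition ds (d : data) : {ffun 'I_Tp -> {ffun 'I_H -> S}} := d.2.2.2.2.2.

Definition PD (d : data) : R :=
  PZ (dz d) *
  \prod_(t : 'I_Tp)
    (PW (dw d t) * epi_prob (dz d) pib (dw d t) (ds d t) (dob d t) (dg d t) *
     \prod_(h : 'I_H)
        pistar (dz d) h (past (dob d t) (dg d t) h) (dob d t h) (dw d t)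
               (dgs d t h)).

Definition PrD (E : pred data) : R := \sum_(d : data | E d) PD d.

(* the event that the data point's token sequence starts with the prompt
   pt_h^t = {w^i, tau_H^i}_{i<t} u {w^t, tau_h^t}, the prompt being read off
   the arrays (wp, op, gp) *)
Definition prompt_ev (t : 'I_Tp) (h : 'I_H) (wp : {ffun 'I_Tp -> W})
  (op : {ffun 'I_Tp -> {ffun 'I_H -> O}}) (gp : {ffun 'I_Tp -> {ffun 'I_H -> G}})
  : pred data := fun d =>
  [&& [forall i : 'I_Tp, (i <= t)%N ==> (dw d i == wp i)],
      [forall i : 'I_Tp, (i < t)%N ==> ((dob d i == op i) && (dg d i == gp i))],
      [forall j : 'I_H, (j < h)%N ==>
          ((dob d t j == op t j) && (dg d t j == gp t j))]
    & dob d t h == op t h].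

(* the perfect LLM: conditional law under P_D of the next target token
   (the expert label g^{t,*}_h) given the prompt *)
Definition LLM t h wp op gp (g : G) : R :=
  PrD [pred d | prompt_ev t h wp op gp d && (dgs d t h == g)] /
  PrD (prompt_ev t h wp op gp).

Definition posterior t h wp op gp (z : Z) : R :=
  PrD [pred d | prompt_ev t h wp op gp d && (dz d == z)] /
  PrD (prompt_ev t h wp op gp).

End Model.

(* The expert label g^{t,*}_h enters the pretraining law only through the
   factor pi*_{z,h}(g^{t,*}_h | tau_h^t, w^t): the rest of the product does not
   read that label, and the prompt does not contain it.  Transposing the value
   of the label is therefore a bijection of the data space which preserves the
   prompt event, z and the remaining factor, so conditionally on (z, prompt)
   the label is distributed as pi*_{z,h}(. | tau_h^t, w^t).  Averaging over the
   posterior of z gives the proposition. *)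
From mathcomp Require Import all_boot all_order perm all_algebra.
Set Implicit Arguments. Unset Strict Implicit. Unset Printing Implicit Defensive.
Import GRing.Theory.
Local Open Scope ring_scope.

Lemma tperm_eqR (T : finType) (x y z : T) : (tperm x y z == y) = (z == x).
Proof. by rewrite -[X in _ == X](tpermL x y) (inj_eq perm_inj). Qed.

Lemma prodD1_mkcond (R : comPzSemiRingType) (I : finType) (i0 : I) (F : I -> R) :
  \prod_i F i = F i0 * \prod_i (if i == i0 then 1 else F i).
Proof.
rewrite (bigD1 i0) //= big_mkcond /=; congr (_ * _).
by apply: eq_bigr => i _; rewrite if_neg.
Qed.

Lemma prod_factor_out (R : comPzSemiRingType) (I J : finType) (b : I -> R)
    (a : I -> J -> R) (i0 : I) (j0 : J) :
  \prod_i (b i * \prod_j a i j) =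
  a i0 j0 * \prod_i (b i * \prod_j (if (i == i0) && (j == j0) then 1 else a i j)).
Proof.
rewrite !big_split /= mulrCA; congr (_ * _).
rewrite !pair_big (prodD1_mkcond (i0, j0)) /=.
by congr (_ * _); apply: eq_bigr => -[i j] _; rewrite xpair_eqE.
Qed.

Section LabelIndependence.

Variables (R : pzSemiRingType) (T K : finType).
Variables (key : T -> K) (swap : K -> K -> T -> T).
Hypothesis swapK : forall x y, involutive (swap x y).
Hypothesis key_swap : forall x y d, key (swap x y d) = tperm x y (key d).
Variables (P : pred T) (Q : T -> R).
Hypothesis P_swap : forall x y d, P (swap x y d) = P d.
Hypothesis Q_swap : forall x y d, Q (swap x y d) = Q d.

Lemma sum_key_swap x y :
  \sum_(d | P d && (key d == y)) Q d = \sum_(d | P d && (key d == x)) Q d.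
Proof.
rewrite (reindex_inj (can_inj (swapK x y))).
by apply: eq_big => [d|d _]; rewrite ?P_swap ?key_swap ?tperm_eqR ?Q_swap.
Qed.

Lemma sum_key_factor (f : K -> R) (F : T -> R) x :
  \sum_y f y = 1 -> (forall d, P d -> F d = f (key d) * Q d) ->
  \sum_(d | P d && (key d == x)) F d = f x * \sum_(d | P d) F d.
Proof.
move=> f_sum1 FE.
have sum_keyE y : \sum_(d | P d && (key d == y)) F d =
                  f y * \sum_(d | P d && (key d == x)) Q d.
  rewrite -(sum_key_swap x y) mulr_sumr.
  by apply: eq_bigr => d /andP[Pd /eqP <-]; exact: FE.
rewrite sum_keyE [in RHS](partition_big key predT) //=.
under [in RHS]eq_bigr do rewrite sum_keyE.
by rewrite -mulr_suml f_sum1 mul1r.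
Qed.

End LabelIndependence.

Lemma eq_past (O G : finType) (H : nat) (o o' : {ffun 'I_H -> O})
    (g g' : {ffun 'I_H -> G}) (h : 'I_H) :
  (forall j : 'I_H, (j < h)%N -> o j = o' j /\ g j = g' j) ->
  past o g h = past o' g' h.
Proof.
move=> eq_below; apply/eq_in_map => i; rewrite mem_filter => /andP[ih _].
by have [-> ->] := eq_below i ih.
Qed.

Section ExpertLabel.

Variables (R : realFieldType) (Z S O G W : finType) (H Tp : nat).
Variables (rho : S -> R) (Ptr : Z -> 'I_H -> S -> G -> S -> R) (Ob : S -> O -> R).
Variables (PZ : Z -> R) (PW : W -> R) (pib : policy R O G W H).
Variables (pistar : Z -> policy R O G W H).

Local Notation data := (data Z S O G W H Tp).
Local Notation PD := (PD rho Ptr Ob PZ PW pib pistar).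
Local Notation PrD := (PrD rho Ptr Ob PZ PW pib pistar).

Definition expert_factor (d : data) (i : 'I_Tp) (j : 'I_H) : R :=
  pistar (dz d) j (past (dob d i) (dg d i) j) (dob d i j) (dw d i) (dgs d i j).

Variables (t : 'I_Tp) (h : 'I_H).

Definition PD_rest (d : data) : R :=
  PZ (dz d) *
  \prod_(i : 'I_Tp)
    (PW (dw d i) * epi_prob rho Ptr Ob (dz d) pib (dw d i) (ds d i) (dob d i) (dg d i) *
     \prod_(j : 'I_H) (if (i == t) && (j == h) then 1 else expert_factor d i j)).

Lemma PD_factor d : PD d = expert_factor d t h * PD_rest d.
Proof. by rewrite /PD (prod_factor_out _ (expert_factor d) t h) mulrCA. Qed.

Definition swap_label (x y : G) (d : data) : data :=
  (dz d, (dw d, (dob d, (dg d, ([ffun i => [ffun j =>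
     if (i == t) && (j == h) then tperm x y (dgs d i j) else dgs d i j]],
   ds d))))).

Lemma swap_labelK x y : involutive (swap_label x y).
Proof.
move=> [z [w [o [g [gs s]]]]]; congr (_, (_, (_, (_, (_, _))))).
apply/ffunP => i; apply/ffunP => j; rewrite !ffunE /dgs /=.
by case: ifP => ->; rewrite ?tpermK.
Qed.

Lemma dgs_swap_label x y d : dgs (swap_label x y d) t h = tperm x y (dgs d t h).
Proof. by rewrite /dgs /= !ffunE !eqxx. Qed.

Lemma PD_rest_swap_label x y d : PD_rest (swap_label x y d) = PD_rest d.
Proof.
congr (_ * _); apply: eq_bigr => i _; congr (_ * _).
apply: eq_bigr => j _; case: ifP => // not_th.
by rewrite /expert_factor {1}/dgs /= !ffunE not_th.
Qed.

Variables (wp : {ffun 'I_Tp -> W}) (op : {ffun 'I_Tp -> {ffun 'I_H -> O}}).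
Variable (gp : {ffun 'I_Tp -> {ffun 'I_H -> G}}).

Local Notation prompt := (prompt_ev t h wp op gp).

Lemma expert_factor_prompt d :
  prompt d ->
  expert_factor d t h =
  pistar (dz d) h (past (op t) (gp t) h) (op t h) (wp t) (dgs d t h).
Proof.
case/and4P=> /forallP w_eq /forallP _ /forallP tau_eq /eqP o_eq.
have /eqP wt_eq := implyP (w_eq t) (leqnn t).
rewrite /expert_factor o_eq wt_eq; congr (pistar _ _ _ _ _ _).
apply: eq_past => j jh.
by have /andP[/eqP -> /eqP ->] := implyP (tau_eq j) jh.
Qed.

Lemma PrD_prompt_label z g :
  is_policy (pistar z) ->
  PrD [pred d | prompt d && (dz d == z) && (dgs d t h == g)] =
  pistar z h (past (op t) (gp t) h) (op t h) (wp t) g *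
  PrD [pred d | prompt d && (dz d == z)].
Proof.
move=> pistar_policy.
have [_ pistar_sum1] := pistar_policy h (past (op t) (gp t) h) (op t h) (wp t).
apply: (sum_key_factor swap_labelK dgs_swap_label _ PD_rest_swap_label) => //.
move=> d /andP[prompt_d /eqP <-].
by rewrite -expert_factor_prompt // PD_factor.
Qed.

End ExpertLabel.

Theorem proposition1 (R : realFieldType) (Z S O G W : finType) (H Tp : nat)
  (rho : S -> R) (Ptr : Z -> 'I_H -> S -> G -> S -> R) (Ob : S -> O -> R)
  (r : 'I_H -> O -> W -> R)
  (PZ : Z -> R) (PW : W -> R) (pib : policy R O G W H)
  (pistar : Z -> policy R O G W H) :
  is_dist rho ->
  (forall z h s g, is_dist (Ptr z h s g)) ->
  (forall s, is_dist (Ob s)) ->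
  (forall h o w, 0 <= r h o w <= 1) ->
  is_dist PZ -> is_dist PW ->
  is_policy pib ->
  (forall z, is_policy (pistar z)) ->
  (* pi*_z(w) is an optimal policy for (z, w) *)
  (forall z w (pi : policy R O G W H), is_policy pi ->
     J rho Ptr Ob r z pi w <= J rho Ptr Ob r z (pistar z) w) ->
  forall (t : 'I_Tp) (h : 'I_H) (wp : {ffun 'I_Tp -> W})
         (op : {ffun 'I_Tp -> {ffun 'I_H -> O}})
         (gp : {ffun 'I_Tp -> {ffun 'I_H -> G}}),
  0 < PrD rho Ptr Ob PZ PW pib pistar (prompt_ev t h wp op gp) ->
  forall g : G,
    LLM rho Ptr Ob PZ PW pib pistar t h wp op gp g =
    \sum_(z : Z) pistar z h (past (op t) (gp t) h) (op t h) (wp t) g *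
                 posterior rho Ptr Ob PZ PW pib pistar t h wp op gp z.
Proof.
move=> _ _ _ _ _ _ _ pistar_policy _ t h wp op gp _ g.
rewrite /LLM /posterior {1}/PrD (partition_big (fun d => dz d) predT) //= mulr_suml.
apply: eq_bigr => z _; rewrite mulrA -PrD_prompt_label //.
by congr (_ / _); apply: eq_bigl => d /=; rewrite andbAC.
Qed.
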